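(* Let $n\ge1$, $d\in(0,2]$, and for $\eta\in[0,\pi/2]$ let $T_\eta=\{(\cos\eta\,\mathbf{v}_1;\sin\eta\,\mathbf{v}_2):\mathbf{v}_1,\mathbf{v}_2\in S^{n-1}\}\subset\mathbb{R}^{2n}$. Put $\Delta\eta=2\arcsin(d/2)$ and $t(d)=\left\lfloor\frac{\pi}{4\arcsin(d/2)}\right\rfloor$. Then: (1) the minimum angular interval $|\eta-\eta'|$ between $\eta,\eta'\in[0,\pi/2]$ for which the leaves $T_\eta,T_{\eta'}$ are at minimum distance at least $d$ is $\Delta\eta=2\arcsin(d/2)$; (2) the maximum number of disjoint intervals of length $\Delta\eta$ fitting in $[0,\pi/2]$ is $t(d)$; (3) the leaves $T_\eta$ are pairwise at minimum distance at least $d$ if the parameters are chosen as either (a) $\eta=\eta_0+k\Delta\eta$ for $k\in\{0,1,\dots,t(d)\}$, where $0\le\eta_0\le(\pi/2-t(d)\Delta\eta)/2$, or (b) $\eta=\pi/4+k\Delta\eta$ for $k\in\{0,1,\dots,\lfloor t(d)/2\rfloor\}$.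
   Context: $S^{n-1}$ is the unit sphere of $\mathbb{R}^n$; the minimum distance between two sets $A,B\subset\mathbb{R}^{2n}$ is $\inf\{\|a-b\|:a\in A,b\in B\}$. *)

From HB Require Import structures.
From mathcomp Require Import all_boot all_order all_algebra.
From mathcomp Require Import all_classical all_reals all_analysis.
Unset Printing Implicit Defensive.
Import Order.TTheory GRing.Theory Num.Theory.
Local Open Scope classical_set_scope.
Local Open Scope ring_scope.

Definition enorm {R : realType} {m : nat} (x : 'rV[R]_m) : R :=
  Num.sqrt (\sum_(i < m) x ord0 i ^+ 2).

Definition unit_sphere (R : realType) (n : nat) : set 'rV[R]_n :=
  [set v | enorm v = 1].

Definition leafT (R : realType) (n : nat) (eta : R) : set 'rV[R]_(n + n) :=
  [set x | exists v1 v2, unit_sphere R n v1 /\ unit_sphere R n v2 /\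
             x = row_mx (cos eta *: v1) (sin eta *: v2)].

Definition min_dist {R : realType} {m : nat} (A B : set 'rV[R]_m) : R :=
  inf [set r | exists a b, A a /\ B b /\ r = enorm (a - b)].

Definition delta_eta {R : realType} (d : R) : R := 2 * asin (d / 2).

Definition t_d {R : realType} (d : R) : int := Num.floor (pi / (4 * asin (d / 2))).

(* m intervals [a i, a i + L] (i < m) lie in [0, pi/2] and are pairwise
   disjoint (as intervals of the line, i.e. their interiors do not meet). *)
Definition intervals_fit {R : realType} (L : R) (m : nat) (a : nat -> R) : Prop :=
  (forall i, (i < m)%N -> 0 <= a i /\ a i + L <= pi / 2) /\
  (forall i j, (i < m)%N -> (j < m)%N -> i <> j ->
     forall x : R, ~ ((a i < x < a i + L) /\ (a j < x < a j + L))).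

From HB Require Import structures.
From mathcomp Require Import all_boot all_order all_algebra.
From mathcomp Require Import all_classical all_reals all_analysis.
From mathcomp Require Import ring lra.
Import Order.TTheory GRing.Theory Num.Theory.
Local Open Scope classical_set_scope.
Local Open Scope ring_scope.

(** The distance between [(cos a v1; sin a v2)] and [(cos b w1; sin b w2)] is smallest
    when [v1 = w1] and [v2 = w2], so for [a, b] in [[0, pi/2]] the minimum distance between
    the leaves [T_a] and [T_b] is the chord [|e^(ia) - e^(ib)| = sqrt (2 - 2 cos (a - b))];
    since [cos (2 asin (d/2)) = 1 - d^2/2] and [cos] decreases on [[0, pi]], this chord is
    at least [d] exactly when [|a - b| >= 2 asin (d/2)].  The left endpoints of disjoint
    intervals of length [L] in [[0, pi/2]] are [L]-separated points of [[0, pi/2 - L]], so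
    there are at most [(pi/2 - L)/L + 1] of them, and the grid [0, L, 2L, ...] attains this
    bound; the progressions of (3) stay inside [[0, pi/2]] and have step [L]. *)

Section Leaves.
Variables (R : realType) (n : nat).
Implicit Types (eta : R) (v w : 'rV[R]_n).

Lemma sum_sqr_row_mx m1 m2 (x : 'rV[R]_m1) (y : 'rV[R]_m2) :
  \sum_(i < m1 + m2) row_mx x y ord0 i ^+ 2 =
  \sum_(i < m1) x ord0 i ^+ 2 + \sum_(i < m2) y ord0 i ^+ 2.
Proof.
rewrite big_split_ord; congr (_ + _); apply: eq_bigr => i _.
  by rewrite row_mxEl.
by rewrite row_mxEr.
Qed.

Lemma unit_sphere_sum_sqr v : unit_sphere R n v -> \sum_(i < n) v ord0 i ^+ 2 = 1.
Proof.
rewrite /unit_sphere /enorm /= => v1.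
have sum_ge0 : 0 <= \sum_(i < n) v ord0 i ^+ 2 by apply: sumr_ge0 => i _; exact: sqr_ge0.
by rewrite -(sqr_sqrtr sum_ge0) v1 expr1n.
Qed.

Lemma unit_sphere_nonempty : (0 < n)%N -> exists e, unit_sphere R n e.
Proof.
move=> n_gt0; pose i0 : 'I_n := Ordinal n_gt0.
exists (\row_i (i == i0)%:R); rewrite /unit_sphere /enorm /=.
rewrite (bigD1 i0) //= big1 ?addr0; first by rewrite !mxE eqxx expr1n sqrtr1.
by move=> i /negbTE i_neq0; rewrite !mxE i_neq0 expr0n.
Qed.

Lemma enorm_row_mx_sub (c s c' s' : R) v1 v2 w1 w2 :
  enorm (row_mx (c *: v1) (s *: v2) - row_mx (c' *: w1) (s' *: w2)) =
  Num.sqrt (\sum_(i < n) (c * v1 ord0 i - c' * w1 ord0 i) ^+ 2 +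
            \sum_(i < n) (s * v2 ord0 i - s' * w2 ord0 i) ^+ 2).
Proof.
rewrite /enorm opp_row_mx add_row_mx sum_sqr_row_mx.
by congr (Num.sqrt (_ + _)); apply: eq_bigr => i _; rewrite !mxE.
Qed.

(* The right-hand side exceeds the left one by [c c' |v - w|^2]. *)
Lemma sqr_sub_le_sum_sqr_scale (c c' : R) v w :
  unit_sphere R n v -> unit_sphere R n w -> 0 <= c * c' ->
  (c - c') ^+ 2 <= \sum_(i < n) (c * v ord0 i - c' * w ord0 i) ^+ 2.
Proof.
move=> /unit_sphere_sum_sqr v1 /unit_sphere_sum_sqr w1 cc'_ge0.
have -> : (c - c') ^+ 2 = (c ^+ 2 - c * c') * \sum_(i < n) v ord0 i ^+ 2 +
    (c' ^+ 2 - c * c') * \sum_(i < n) w ord0 i ^+ 2.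
  by rewrite v1 w1; ring.
rewrite !mulr_sumr -big_split /=; apply: ler_sum => i _.
have : 0 <= c * c' * (v ord0 i - w ord0 i) ^+ 2 by rewrite mulr_ge0 ?sqr_ge0.
by nra.
Qed.

Lemma min_dist_leafT eta eta' : (0 < n)%N ->
  0 <= cos eta * cos eta' -> 0 <= sin eta * sin eta' ->
  min_dist (leafT R n eta) (leafT R n eta') =
  Num.sqrt ((cos eta - cos eta') ^+ 2 + (sin eta - sin eta') ^+ 2).
Proof.
move=> n_gt0 cos_ge0 sin_ge0; set D := Num.sqrt _.
rewrite /min_dist; set dists := (X in inf X).
have D_lb : lbound dists D.
  move=> r [a [b [[v1 [v2 [v1S [v2S ->]]]] [[w1 [w2 [w1S [w2S ->]]]] ->]]]].
  rewrite enorm_row_mx_sub /D; apply/ler_wsqrtr/lerD;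
  exact: sqr_sub_le_sum_sqr_scale.
have [e eS] := unit_sphere_nonempty n_gt0.
have D_dist : dists D.
  exists (row_mx (cos eta *: e) (sin eta *: e)),
         (row_mx (cos eta' *: e) (sin eta' *: e)).
  split; first by exists e, e.
  split; first by exists e, e.
  have scale_e (x y : R) : (x - y) ^+ 2 = \sum_(i < n) (x * e ord0 i - y * e ord0 i) ^+ 2.
    rewrite -[LHS]mul1r -(unit_sphere_sum_sqr _ eS) mulr_suml.
    by apply: eq_bigr => i _; ring.
  by rewrite enorm_row_mx_sub /D -!scale_e.
apply/le_anti/andP; split; first by apply: ge_inf D_dist; exists D.
by apply: lb_le_inf D_lb; exists D.
Qed.

End Leaves.

Section Chord.
Context {R : realType}.
Implicit Types x y : R.

Lemma chord_sqr x y :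
  (cos x - cos y) ^+ 2 + (sin x - sin y) ^+ 2 = 2 - 2 * cos (x - y).
Proof. by rewrite cosB; have := cos2Dsin2 x; have := cos2Dsin2 y; lra. Qed.

Lemma asin_gt0 {y} : 0 < y <= 1 -> 0 < asin y.
Proof.
move=> /andP[y_gt0 y_le1].
have y_itv : -1 <= y <= 1 by apply/andP; split; lra.
have pi_gt0 := pi_gt0 R.
rewrite -ltr_sin ?sin0 ?asinK ?in_itv /= ?y_itv //; last first.
  by rewrite asin_geNpi2 ?asin_lepi2.
by apply/andP; split; lra.
Qed.

Lemma cos_2asin y : -1 <= y <= 1 -> cos (2 * asin y) = 1 - 2 * y ^+ 2.
Proof.
move=> y_itv; rewrite mulr_natl cos_mulr2n cos_asin // sqr_sqrtr; first by ring.
by rewrite subr_ge0 -ler_sqrt // sqrtr_sqr sqrtr1 ler_norml.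
Qed.

Lemma ler_cos : {in `[0, pi : R] &, {mono cos : x y /~ y <= x}}.
Proof. by move=> x y x_itv y_itv; rewrite !leNgt ltr_cos. Qed.

Lemma delta_eta_itv {d : R} : 0 < d <= 2 -> 0 < delta_eta d <= pi.
Proof.
move=> /andP[d_gt0 d_le2]; have d2_itv : 0 < d / 2 <= 1 by apply/andP; split; lra.
have := asin_gt0 d2_itv; have : asin (d / 2) <= pi / 2 by apply: asin_lepi2; lra.
by rewrite /delta_eta; lra.
Qed.

Lemma delta_eta_le_chord (d x : R) : 0 < d <= 2 -> `|x| <= pi ->
  (d <= Num.sqrt (2 - 2 * cos x)) = (delta_eta d <= `|x|).
Proof.
move=> d_itv x_le_pi; have /andP[d_gt0 d_le2] := d_itv.
have /andP[delta_gt0 delta_le_pi] := delta_eta_itv d_itv.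
have chord_ge0 : 0 <= 2 - 2 * cos x by have := cos_le1 x; lra.
rewrite -{1}(gtr0_norm d_gt0) -sqrtr_sqr ler_sqrt //.
rewrite -[delta_eta d <= _]ler_cos ?in_itv /= ?normr_ge0 ?(ltW delta_gt0) //.
rewrite cos_norm /delta_eta cos_2asin; last by apply/andP; split; lra.
by apply/idP/idP; lra.
Qed.

End Chord.

Lemma leafT_min_dist_ge (R : realType) (n : nat) (d eta eta' : R) :
  (0 < n)%N -> 0 < d <= 2 -> 0 <= eta <= pi / 2 -> 0 <= eta' <= pi / 2 ->
  (d <= min_dist (leafT R n eta) (leafT R n eta')) = (delta_eta d <= `|eta - eta'|).
Proof.
move=> n_gt0 d_itv /andP[eta_ge0 eta_le] /andP[eta'_ge0 eta'_le].
have pi_gt0 := pi_gt0 R.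
have cos_ge0 x : 0 <= x <= pi / 2 -> 0 <= cos x.
  by move=> /andP[? ?]; apply: cos_ge0_pihalf; apply/andP; split; lra.
have sin_ge0 x : 0 <= x <= pi / 2 -> 0 <= sin x.
  by move=> /andP[? ?]; apply: sin_ge0_pi; apply/andP; split; lra.
rewrite min_dist_leafT ?mulr_ge0 ?cos_ge0 ?sin_ge0 ?eta_ge0 ?eta'_ge0 //.
rewrite chord_sqr delta_eta_le_chord // ler_norml; apply/andP; split; lra.
Qed.

Lemma natr_dist_ge1 (R : numDomainType) (k k' : nat) : k <> k' -> 1 <= `|k%:R - k'%:R : R|.
Proof.
have dist_ge1 i j : (j < i)%N -> 1 <= `|i%:R - j%:R : R|.
  by move=> lt_ji; rewrite ger0_norm ?subr_ge0 ?ler_nat 1?ltnW // lerBrDr addrC natr1 ler_nat.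
by move=> /eqP; rewrite neq_ltn => /orP[] ?; [rewrite distrC|]; exact: dist_ge1.
Qed.

Lemma leafT_progression_min_dist_ge (R : realType) (n : nat) (d eta0 K : R) (k k' : nat) :
  (0 < n)%N -> 0 < d <= 2 -> 0 <= eta0 -> eta0 + K * delta_eta d <= pi / 2 ->
  k%:R <= K -> k'%:R <= K -> k <> k' ->
  d <= min_dist (leafT R n (eta0 + k%:R * delta_eta d))
                (leafT R n (eta0 + k'%:R * delta_eta d)).
Proof.
move=> n_gt0 d_itv eta0_ge0 eta0_le k_le k'_le k_neq.
have /andP[L_gt0 _] := delta_eta_itv d_itv.
have in_range j : j%:R <= K -> 0 <= eta0 + j%:R * delta_eta d <= pi / 2.
  move=> j_le; have : j%:R * delta_eta d <= K * delta_eta d by rewrite ler_pM2r.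
  have : 0 <= j%:R * delta_eta d by rewrite mulr_ge0 // ltW.
  by move=> *; apply/andP; split; lra.
rewrite leafT_min_dist_ge ?in_range // opprD addrACA subrr add0r -mulrBl normrM.
by rewrite (gtr0_norm L_gt0) ler_peMl ?natr_dist_ge1 ?ltW.
Qed.

Section Packing.
Context {R : realType}.
Implicit Types (L B : R) (a : nat -> R).

(* Pigeonhole: [i |-> trunc (a i / L)] is injective on [m] pairwise [L]-separated points. *)
Lemma separated_count_le {L B m a} : 0 < L ->
  (forall i, (i < m)%N -> 0 <= a i <= B) ->
  (forall i j, (i < m)%N -> (j < m)%N -> i <> j -> L <= `|a i - a j|) ->
  (m <= (Num.truncn (B / L)).+1)%N.
Proof.
move=> L_gt0 a_itv a_sep; pose f i := Num.truncn (a i / L).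
have aL_ge0 i : (i < m)%N -> 0 <= a i / L.
  by move=> /a_itv /andP[a_ge0 _]; rewrite divr_ge0 // ltW.
have := @uniq_leq_size _ (map f (iota 0 m)) (iota 0 (Num.truncn (B / L)).+1).
rewrite size_map !size_iota; apply.
  rewrite map_inj_in_uniq ?iota_uniq // => i j; rewrite !mem_iota !add0n => i_lt j_lt f_eq.
  apply: contra_eq f_eq => /eqP ij_neq; apply/eqP => f_eq.
  have := a_sep i j i_lt j_lt ij_neq; apply/negP; rewrite -ltNge.
  have /andP[fi_le fi_gt] := truncn_itv (aL_ge0 i i_lt).
  have /andP[fj_le fj_gt] := truncn_itv (aL_ge0 j j_lt).
  move: fi_le fi_gt fj_le fj_gt; rewrite -/(f i) -/(f j) f_eq -!natr1.
  rewrite !ler_pdivlMr // !ltr_pdivrMr // ltr_norml => *.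
  by apply/andP; split; nra.
move=> x /mapP[i]; rewrite !mem_iota !add0n ltnS => /a_itv /andP[a_ge0 a_le] ->.
by apply: le_truncn; rewrite ler_pM2r ?invr_gt0.
Qed.

Lemma intervals_fit_separated {L m a} : intervals_fit L m a ->
  forall i j, (i < m)%N -> (j < m)%N -> i <> j -> L <= `|a i - a j|.
Proof.
move=> [_ a_disj] i j i_lt j_lt ij_neq; rewrite leNgt; apply/negP => a_close.
apply: (a_disj i j i_lt j_lt ij_neq ((a i + a j + L) / 2)).
by move: a_close; rewrite ltr_norml => /andP[? ?]; split; apply/andP; split; lra.
Qed.

Lemma intervals_fit_count {L m a} : 0 < L -> intervals_fit L m a -> m%:R * L <= pi / 2.
Proof.
case: m => [|m] L_gt0 a_fit; first by rewrite mul0r divr_ge0 ?pi_ge0.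
have a_itv i : (i < m.+1)%N -> 0 <= a i <= pi / 2 - L.
  by move=> /(proj1 a_fit) [? ?]; apply/andP; split; lra.
have [a0_ge0 a0_le] := proj1 a_fit 0%N isT.
have trunc_le : (Num.truncn ((pi / 2 - L) / L))%:R <= (pi / 2 - L) / L.
  by rewrite truncn_le divr_ge0; lra.
have := separated_count_le L_gt0 a_itv (intervals_fit_separated a_fit).
rewrite ltnS -(ler_nat R) => /le_trans /(_ trunc_le).
by rewrite ler_pdivlMr // -natr1 mulrDl; lra.
Qed.

Lemma intervals_fit_grid L m : 0 <= L -> m%:R * L <= pi / 2 ->
  intervals_fit L m (fun i => i%:R * L).
Proof.
move=> L_ge0 mL_le; split=> [i i_lt|i j i_lt j_lt ij_neq x].
  have : i.+1%:R * L <= m%:R * L by rewrite ler_wpM2r // ler_nat.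
  by rewrite -natr1 mulrDl mul1r mulr_ge0 //; split => //; lra.
have gap i' j' : (i' < j')%N -> i'%:R * L + L <= j'%:R * L.
  by move=> lt_ij; rewrite -[X in _ + X]mul1r -mulrDl ler_wpM2r // natr1 ler_nat.
case=> /andP[? ?] /andP[? ?].
by case: (ltngtP i j) => [/gap|/gap|/ij_neq]; lra.
Qed.

End Packing.

Section NumberOfLeaves.
Context {R : realType} {d : R} (d_itv : 0 < d <= 2).

Lemma le_t_d (k : int) : (k <= t_d d) = (k%:~R * delta_eta d <= pi / 2).
Proof.
have /andP[L_gt0 _] := delta_eta_itv d_itv.
rewrite /t_d floor_ge_int -ler_pdivlMr // /delta_eta.
by congr (_ <= _); field; apply: lt0r_neq0; move: L_gt0; rewrite /delta_eta; lra.
Qed.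

Lemma t_d_ge0 : 0 <= t_d d.
Proof. by rewrite le_t_d mul0r divr_ge0 ?pi_ge0. Qed.

Lemma t_d_delta_eta_le : (t_d d)%:~R * delta_eta d <= pi / 2.
Proof. by rewrite -le_t_d. Qed.

End NumberOfLeaves.

Theorem corollary1 (R : realType) (n : nat) (hn : (1 <= n)%N)
    (d : R) (hd0 : 0 < d) (hd2 : d <= 2) :
  (* (1) leaves are at minimum distance >= d exactly when |eta - eta'| >= Delta eta *)
  (forall eta eta' : R, 0 <= eta <= pi / 2 -> 0 <= eta' <= pi / 2 ->
     (d <= min_dist (leafT R n eta) (leafT R n eta') <-> delta_eta d <= `|eta - eta'|))
  /\
  (* (2) the maximum number of disjoint intervals of length Delta eta in [0, pi/2] is t(d) *)
  ((exists a : nat -> R, exists m : nat,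
      m%:Z = t_d d /\ intervals_fit (delta_eta d) m a) /\
   (forall (m : nat) (a : nat -> R),
      intervals_fit (delta_eta d) m a -> m%:Z <= t_d d))
  /\
  (* (3a) *)
  (forall eta0 : R,
     0 <= eta0 <= (pi / 2 - (t_d d)%:~R * delta_eta d) / 2 ->
     forall k k' : nat, k%:Z <= t_d d -> k'%:Z <= t_d d -> k <> k' ->
       d <= min_dist (leafT R n (eta0 + k%:R * delta_eta d))
                     (leafT R n (eta0 + k'%:R * delta_eta d)))
  /\
  (* (3b) *)
  (forall k k' : nat,
     k%:Z <= Num.floor ((t_d d)%:~R / 2 : R) ->
     k'%:Z <= Num.floor ((t_d d)%:~R / 2 : R) -> k <> k' ->
       d <= min_dist (leafT R n (pi / 4 + k%:R * delta_eta d))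
                     (leafT R n (pi / 4 + k'%:R * delta_eta d))).
Proof.
have d_itv : 0 < d <= 2 by apply/andP.
have /andP[L_gt0 _] := delta_eta_itv d_itv.
have t_ge0 := t_d_ge0 d_itv.
have tL_le := t_d_delta_eta_le d_itv.
have pi_gt0 := pi_gt0 R.
split; first by move=> eta eta' eta_itv eta'_itv; rewrite leafT_min_dist_ge.
split; first split.
- exists (fun i => i%:R * delta_eta d), `|t_d d|%N.
  rewrite gez0_abs //; split => //.
  by apply: intervals_fit_grid; [exact: ltW | rewrite natr_absz ger0_norm].
- by move=> m a /(intervals_fit_count L_gt0); rewrite (le_t_d d_itv).
split=> [eta0 /andP[eta0_ge0 eta0_le]|] k k' + + k_neq.
- rewrite -!(ler_int R) => k_le k'_le.
  by apply: (leafT_progression_min_dist_ge _ _ _ _ ((t_d d)%:~R)) => //; lra.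
- rewrite !floor_ge_int => k_le k'_le.
  by apply: (leafT_progression_min_dist_ge _ _ _ _ ((t_d d)%:~R / 2)) => //; lra.
Qed.
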